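(* Every strictly convex reflexive ordered Banach space $X$ with a closed proper generating cone is a $\upsilon$-quasi-lattice.
   Context: An ordered Banach space is a real Banach space $X$ with a cone $X_+$ ($X_++X_+\subseteq X_+$, $\lambda X_+\subseteq X_+$ for $\lambda\ge0$) that is proper ($X_+\cap(-X_+)=\{0\}$); $x\le y$ means $y-x\in X_+$; the cone is generating if $X=X_+-X_+$. $X$ is strictly convex if $\|x+y\|=\|x\|+\|y\|$ implies one of $x,y$ is a non-negative multiple of the other. For $A\subseteq X$, $\upsilon(A)$ is the set of upper bounds of $A$. Let $\sigma_{x,y}(z)=\|z-x\|+\|z-y\|$. A pre-ordered Banach space with closed cone is a $\upsilon$-quasi-lattice if for every $x,y$ the set $\upsilon(\{x,y\})$ is non-empty and there exists a unique element of $\upsilon(\{x,y\})$ minimizing $\sigma_{x,y}$ on $\upsilon(\{x,y\})$. *)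

From HB Require Import structures.
From mathcomp Require Import all_boot all_order all_algebra.
From mathcomp Require Import all_classical all_reals.
From mathcomp Require Import topology normedtype.
Set Implicit Arguments. Unset Strict Implicit. Unset Printing Implicit Defensive.
Import Order.TTheory GRing.Theory Num.Theory.
Import numFieldNormedType.Exports.
Local Open Scope classical_set_scope.
Local Open Scope ring_scope.

Section Defs.
Context {R : realType} {V : normedModType R}.

Definition is_cone (C : set V) : Prop :=
  (forall x y, C x -> C y -> C (x + y)) /\
  (forall (l : R) x, 0 <= l -> C x -> C (l *: x)).

Definition proper_cone (C : set V) : Prop :=
  forall x, C x -> C (- x) -> x = 0.

Definition generating_cone (C : set V) : Prop :=
  forall x, exists a b, C a /\ C b /\ x = a - b.

Definition cone_le (C : set V) (x y : V) : Prop := C (y - x).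

Definition upper_bounds (C : set V) (A : set V) : set V :=
  [set z | forall a, A a -> cone_le C a z].

Definition sigma_xy (x y z : V) : R := `|z - x| + `|z - y|.

Definition upsilon_quasi_lattice (C : set V) : Prop :=
  forall x y : V,
    upper_bounds C [set x; y] !=set0 /\
    exists! z, upper_bounds C [set x; y] z /\
      (forall w, upper_bounds C [set x; y] w -> sigma_xy x y z <= sigma_xy x y w).

Definition strictly_convex : Prop :=
  forall x y : V, `|x + y| = `|x| + `|y| ->
    (exists l : R, 0 <= l /\ x = l *: y) \/ (exists l : R, 0 <= l /\ y = l *: x).

Definition dual_elt (f : V -> R) : Prop :=
  (forall x y, f (x + y) = f x + f y) /\
  (forall (a : R) x, f (a *: x) = a * f x) /\
  continuous f.

Definition dual_normbound (f : V -> R) (M : R) : Prop :=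
  forall x, `|f x| <= M * `|x|.

(** reflexivity: every continuous linear functional on the dual X* (with the
    operator norm) is evaluation at some point of X, i.e. the canonical
    embedding X -> X** is surjective *)
Definition reflexive_space : Prop :=
  forall Phi : (V -> R) -> R,
    (forall f g, dual_elt f -> dual_elt g ->
       Phi (fun x => f x + g x) = Phi f + Phi g) ->
    (forall (a : R) f, dual_elt f -> Phi (fun x => a * f x) = a * Phi f) ->
    (exists c : R, forall f (M : R), dual_elt f -> 0 <= M ->
       dual_normbound f M -> `|Phi f| <= c * M) ->
    exists x : V, forall f, dual_elt f -> Phi f = f x.

End Defs.

(* Existence: a minimizing sequence of [sigma_xy x y] on the upper bounds of
   [{x, y}] is bounded, so by reflexivity it has a weak cluster point [z] along
   an ultrafilter: the ultralimit of [f (z_n)] is a bounded functional on the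
   dual, hence evaluation at some [z]. Hahn-Banach separation makes the closed
   cone weakly closed, so [z] is an upper bound, and norming functionals make
   the norm weakly lower semicontinuous, so [z] is a minimizer.
   Uniqueness: the midpoint of two minimizers [z], [z'] is again an upper bound,
   which forces equality in the triangle inequalities for [(z - x) + (z' - x)]
   and [(z - y) + (z' - y)]. By strict convexity both pairs are positively
   colinear, and comparing norms puts both [z - z'] and [z' - z] in the proper
   cone. *)

From HB Require Import structures.
From mathcomp Require Import all_boot all_order all_algebra.
From mathcomp Require Import all_classical all_reals.
From mathcomp Require Import topology normedtype.
From mathcomp Require Import interval_inference ring lra.
Import Order.TTheory GRing.Theory Num.Theory.
Import numFieldNormedType.Exports.
Local Open Scope classical_set_scope.
Local Open Scope ring_scope.

Section HahnBanach.
Context {R : realType} {V : lmodType R}.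
Implicit Types (p : V -> R) (G : set (V * R)).

Definition sublinear p :=
  (forall x y, p (x + y) <= p x + p y) /\
  (forall (l : R) x, 0 <= l -> p (l *: x) = l * p x).

(* [G] is the graph of a linear functional on a subspace, dominated by [p] and
   equal to [p w] at [w]; the last clause is guarded by [G !=set0] so that the
   empty union of a chain still qualifies, as [Zorn_bigcup] requires. *)
Definition dominated_graph p w G :=
  [/\ forall v r s, G (v, r) -> G (v, s) -> r = s,
      forall v r u s, G (v, r) -> G (u, s) -> G (v + u, r + s),
      forall (l : R) v r, G (v, r) -> G (l *: v, l * r),
      forall v r, G (v, r) -> r <= p v &
      G !=set0 -> G (w, p w)].

Lemma sublinear0 p : sublinear p -> p 0 = 0.
Proof. by move=> [_ pZ]; rewrite -(scale0r 0) pZ // mul0r. Qed.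

Lemma sublinear_addN_ge0 p x : sublinear p -> 0 <= p x + p (- x).
Proof. by move=> sp; have := sp.1 x (- x); rewrite subrr sublinear0. Qed.

Lemma dominated_graph_bigcup p w (F : set (set (V * R))) :
  F `<=` dominated_graph p w -> total_on F subset ->
  dominated_graph p w (\bigcup_(G in F) G).
Proof.
move=> Fdom Ftot.
have common q1 q2 : (\bigcup_(G in F) G) q1 -> (\bigcup_(G in F) G) q2 ->
    exists2 G, F G & G q1 /\ G q2.
  move=> [G1 FG1 G1q] [G2 FG2 G2q].
  by case: (Ftot _ _ FG1 FG2) => [/(_ _ G1q)|/(_ _ G2q)];
    [exists G2 | exists G1].
split.
- move=> v r s /common /[apply] -[G FG [Gr Gs]].
  by have [fG _ _ _ _] := Fdom G FG; exact: fG Gr Gs.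
- move=> v r u s /common /[apply] -[G FG [Gr Gs]].
  by have [_ aG _ _ _] := Fdom G FG; exists G => //; exact: aG Gr Gs.
- move=> l v r [G FG Gr].
  by have [_ _ sG _ _] := Fdom G FG; exists G => //; exact: sG.
- move=> v r [G FG Gr].
  by have [_ _ _ dG _] := Fdom G FG; exact: dG.
- move=> [q [G FG Gq]].
  by have [_ _ _ _ wG] := Fdom G FG; exists G => //; apply: wG; exists q.
Qed.

Lemma dominated_graph00 {p w G} : dominated_graph p w G -> G !=set0 -> G (0, 0).
Proof.
by move=> [_ _ sG _ _] [[u s] /(sG 0)]; rewrite scale0r mul0r.
Qed.

Section OneStepExtension.
Variables (p : V -> R) (w v : V) (A : set (V * R)).
Hypotheses (sp : sublinear p) (Adom : dominated_graph p w A) (A0 : A !=set0).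

(* Any [a] between the two bounds below may serve as the value at [v]. *)
Lemma dominated_graph_gap : exists a : R,
  (forall u s, A (u, s) -> s - p (u - v) <= a) /\
  (forall u s, A (u, s) -> a <= p (u + v) - s).
Proof.
have [_ aA sA dA _] := Adom.
have A00 := dominated_graph00 Adom A0.
have gap u s u' s' : A (u, s) -> A (u', s') -> s - p (u - v) <= p (u' + v) - s'.
  move=> Aus Aus'; have := dA _ _ (aA _ _ _ _ Aus Aus').
  have -> : u + u' = (u - v) + (u' + v) by rewrite addrACA addNr addr0.
  by have := sp.1 (u - v) (u' + v); lra.
pose L := [set y | exists u s, A (u, s) /\ y = s - p (u - v)].
have supL : has_sup L.
  split; first by exists (0 - p (0 - v)), 0, 0.
  by exists (p (0 + v) - 0) => y [u [s [Aus ->]]]; exact: gap.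
exists (sup L); split.
  by move=> u s Aus; apply: sup_upper_bound => //; exists u, s.
move=> u s Aus; apply: ge_sup; first by case: supL.
by move=> y [u' [s' [Aus' ->]]]; exact: gap.
Qed.

Section WithValue.
Variable a : R.
Hypotheses (a_ge : forall u s, A (u, s) -> s - p (u - v) <= a)
           (a_le : forall u s, A (u, s) -> a <= p (u + v) - s).

Let B := [set q | exists u s (t : R), A (u, s) /\ q = (u + t *: v, s + t * a)].

Lemma extension_dominated u s t : A (u, s) -> s + t * a <= p (u + t *: v).
Proof.
have [_ _ sA dA _] := Adom; have pZ := sp.2.
move=> Aus; have [->|t_neq0] := eqVneq t 0.
  by rewrite scale0r mul0r !addr0; exact: dA.
have [t_gt0|t_le0] := ltP 0 t.
  have := a_le _ _ (sA t^-1 _ _ Aus); rewrite -(ler_pM2l t_gt0).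
  rewrite mulrBr mulrA mulfV ?gt_eqF // mul1r -(pZ _ _ (ltW t_gt0)).
  by rewrite scalerDr scalerA mulfV ?gt_eqF // scale1r; lra.
have Nt_gt0 : 0 < - t by rewrite oppr_gt0 lt_neqAle t_neq0.
have := a_ge _ _ (sA (- t)^-1 _ _ Aus); rewrite -(ler_pM2l Nt_gt0).
rewrite mulrBr mulrA mulfV ?gt_eqF // mul1r -(pZ _ _ (ltW Nt_gt0)).
by rewrite scalerBr scalerA mulfV ?gt_eqF // scale1r scaleNr opprK; lra.
Qed.

Lemma extension_dominated_graph : (forall r, ~ A (v, r)) ->
  A `<` B /\ dominated_graph p w B.
Proof.
move=> Av; have [fA aA sA _ wA] := Adom.
have AB : A `<=` B.
  by move=> [u s] Aus; exists u, s, 0; rewrite scale0r mul0r !addr0.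
split.
  split => // BA; apply: (Av a); apply: BA.
  exists 0, 0, 1; rewrite scale1r mul1r !add0r.
  by split; first exact: dominated_graph00 Adom A0.
split.
- move=> x r r' [u [s [t [Aus [-> ->]]]]] [u' [s' [t' [Aus' [+ ->]]]]].
  have [<-|t_neq] := eqVneq t t'.
    move=> E; have Eu : u = u' by apply: (addIr (t *: v)).
    by rewrite -Eu in Aus'; rewrite (fA _ _ _ Aus Aus').
  move=> E; exfalso; apply: (Av ((t' - t)^-1 * (s - s'))).
  have D : u - u' = (t' - t) *: v.
    apply: (addIr (t *: v)).
    by rewrite addrAC E addrAC subrr add0r scalerBl subrK.
  have -> : v = (t' - t)^-1 *: (u - u').
    by rewrite D scalerA mulVf ?scale1r // subr_eq0 eq_sym.
  apply: (sA); apply: aA Aus _.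
  by have := sA (-1) _ _ Aus'; rewrite scaleN1r mulN1r.
- move=> x r y r' [u [s [t [Aus [-> ->]]]]] [u' [s' [t' [Aus' [-> ->]]]]].
  exists (u + u'), (s + s'), (t + t'); split; first exact: aA.
  by rewrite scalerDl mulrDl; congr pair; rewrite addrACA.
- move=> l x r [u [s [t [Aus [-> ->]]]]].
  exists (l *: u), (l * s), (l * t); split; first exact: sA.
  by rewrite scalerDr scalerA mulrDr mulrA.
- by move=> x r [u [s [t [Aus [-> ->]]]]]; exact: extension_dominated.
- by move=> _; apply: AB; apply: wA.
Qed.

End WithValue.

Lemma dominated_graph_extend : (forall r, ~ A (v, r)) ->
  exists B, A `<` B /\ dominated_graph p w B.
Proof.
have [a [a_ge a_le]] := dominated_graph_gap.
by move=> Av; eexists; exact: extension_dominated_graph a_ge a_le Av.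
Qed.

End OneStepExtension.

Lemma line_dominated_graph p w : sublinear p ->
  dominated_graph p w [set (t *: w, t * p w) | t in [set: R]].
Proof.
move=> sp; have [_ pZ] := sp; split.
- move=> _ _ _ [t _ [<- <-]] [t' _ [E <-]].
  have [w0|w_neq0] := eqVneq w 0; first by rewrite w0 sublinear0 // !mulr0.
  move/eqP: E; rewrite -subr_eq0 -scalerBl scaler_eq0 (negbTE w_neq0) orbF.
  by rewrite subr_eq0 => /eqP ->.
- move=> _ _ _ _ [t _ [<- <-]] [t' _ [<- <-]].
  by exists (t' + t) => //; rewrite scalerDl mulrDl addrC [_ + t * _]addrC.
- move=> l _ _ [t _ [<- <-]].
  by exists (l * t) => //; rewrite scalerA mulrA.
- move=> _ _ [t _ [<- <-]]; have [t_ge0|t_lt0] := leP 0 t; first by rewrite pZ.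
  have -> : t *: w = (- t) *: (- w) by rewrite scaleNr scalerN opprK.
  rewrite pZ; last by rewrite oppr_ge0 ltW.
  by have := sublinear_addN_ge0 _ w sp; nra.
- by move=> _; exists 1 => //; rewrite scale1r mul1r.
Qed.

Theorem hahn_banach p w : sublinear p ->
  exists f : V -> R, [/\ forall x y, f (x + y) = f x + f y,
    forall (a : R) x, f (a *: x) = a * f x,
    forall x, f x <= p x & f w = p w].
Proof.
move=> sp.
have [A [Adom Amax]] := Zorn_bigcup (@dominated_graph_bigcup p w).
have [fA aA sA dA wA] := Adom.
have A0 : A !=set0.
  apply: contrapT => A0; apply: (Amax _ _ (line_dominated_graph _ w sp)).
  split=> [q Aq|LA]; first by exfalso; apply: A0; exists q.
  by apply: A0; exists (w, p w); apply: LA; exists 1; rewrite ?scale1r ?mul1r.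
have Atot v : exists r, A (v, r).
  apply: contrapT => /forallNP Av.
  have [B [AB Bdom]] := dominated_graph_extend _ _ _ _ sp Adom A0 Av.
  exact: Amax AB Bdom.
pose f v := xget 0 (fun r => A (v, r)).
have Af v : A (v, f v) by exact: (xgetPex 0 (Atot v)).
exists f; split.
- by move=> x y; apply: fA (Af (x + y)) (aA _ _ _ _ (Af x) (Af y)).
- by move=> a x; apply: fA (Af (a *: x)) (sA _ _ _ (Af x)).
- by move=> x; exact: dA (Af x).
- by apply: fA (Af w) (wA A0).
Qed.

End HahnBanach.

Section Dual.
Context {R : realType} {V : normedModType R}.
Implicit Types f : V -> R.

Lemma dual_eltB f u v : dual_elt f -> f (u - v) = f u - f v.
Proof. by move=> [fD [fZ _]]; rewrite fD -scaleN1r fZ mulN1r. Qed.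

Lemma dual_elt_normbound f : dual_elt f -> exists2 M, 0 <= M & dual_normbound f M.
Proof.
move=> [fD [fZ fc]].
have f0 : f 0 = 0 by rewrite -(scale0r 0) fZ mul0r.
have /cvgrPdist_lt/(_ 1 ltr01) := fc 0.
rewrite f0 => /nbhs_norm0P [e /= e_gt0 fe].
exists (2 / e) => [|x]; first by rewrite divr_ge0 // ltW.
have [->|x_neq0] := eqVneq x 0; first by rewrite f0 !normr0 mulr0.
have x_gt0 : 0 < `|x| by rewrite normr_gt0.
pose c := e / (2 * `|x|).
have c_gt0 : 0 < c by rewrite divr_gt0 // mulr_gt0.
have cx : `|c *: x| < e.
  rewrite normrZ gtr0_norm //.
  have -> : c * `|x| = e / 2 by rewrite /c; field; rewrite gt_eqF.
  lra.
have := fe _ cx; rewrite fZ sub0r normrN normrM gtr0_norm //.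
have : c * (2 / e * `|x|) = 1 by rewrite /c; field; rewrite ?gt_eqF.
nra.
Qed.

Lemma dual_elt_of_le_norm f :
  (forall x y, f (x + y) = f x + f y) ->
  (forall (a : R) x, f (a *: x) = a * f x) ->
  (forall x, f x <= `|x|) -> dual_elt f /\ dual_normbound f 1.
Proof.
move=> fD fZ f_le.
have fN x : f (- x) = - f x by rewrite -scaleN1r fZ mulN1r.
have fb : dual_normbound f 1.
  by move=> x; rewrite mul1r ler_norml f_le andbT lerNl -fN -normrN f_le.
split=> //; do 2!split=> //; move=> x.
apply/cvgrPdist_lt => e e_gt0; apply/nbhs_normP; exists e => // y /= xy.
by rewrite -fN -fD; apply: le_lt_trans (fb _) _; rewrite mul1r.
Qed.

Lemma norming_functional w :
  exists f, [/\ dual_elt f, dual_normbound f 1 & f w = `|w|].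
Proof.
have sp : sublinear (fun x : V => `|x|).
  by split=> [|l x l_ge0]; [exact: ler_normD | rewrite normrZ ger0_norm].
have [f [fD fZ f_le fw]] := hahn_banach _ w sp.
by have [df fb] := dual_elt_of_le_norm _ fD fZ f_le; exists f.
Qed.

End Dual.

Section ConeSeparation.
Context {R : realType} {V : normedModType R}.
Variable C : set V.
Hypotheses (Ccone : is_cone C) (C0 : C 0).

Definition opp_cone_dist (v : V) : R := inf [set `|v + c| | c in C].

Lemma opp_cone_dist_le v c : C c -> opp_cone_dist v <= `|v + c|.
Proof.
move=> Cc; apply: ge_inf; last by exists c.
by exists 0 => _ [c' _ <-].
Qed.

Lemma opp_cone_dist_ge v r :
  (forall c, C c -> r <= `|v + c|) -> r <= opp_cone_dist v.
Proof.
move=> r_le; apply: lb_le_inf; first by exists `|v + 0|, 0.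
by move=> _ [c Cc <-]; exact: r_le.
Qed.

Lemma opp_cone_dist_sublinear : sublinear opp_cone_dist.
Proof.
have [CD CZ] := Ccone.
have dist_ge0 v : 0 <= opp_cone_dist v by apply: opp_cone_dist_ge.
split=> [x y|l x].
  suff : opp_cone_dist (x + y) - opp_cone_dist y <= opp_cone_dist x by lra.
  apply: opp_cone_dist_ge => c1 Cc1.
  suff : opp_cone_dist (x + y) - `|x + c1| <= opp_cone_dist y by lra.
  apply: opp_cone_dist_ge => c2 Cc2.
  have := opp_cone_dist_le (x + y) _ (CD _ _ Cc1 Cc2).
  rewrite addrACA; have := ler_normD (x + c1) (y + c2); lra.
rewrite le_eqVlt => /orP[/eqP <-|l_gt0].
  rewrite scale0r mul0r; apply/eqP; rewrite eq_le dist_ge0 andbT.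
  by have := opp_cone_dist_le 0 _ C0; rewrite addr0 normr0.
apply/eqP; rewrite eq_le; apply/andP; split.
  rewrite -ler_pdivrMl //; apply: opp_cone_dist_ge => c Cc.
  rewrite ler_pdivrMl //.
  apply: le_trans (opp_cone_dist_le _ _ (CZ _ _ (ltW l_gt0) Cc)) _.
  by rewrite -scalerDr normrZ gtr0_norm.
apply: opp_cone_dist_ge => c Cc.
have Cc' : C (l^-1 *: c) by apply: CZ; rewrite // invr_ge0 ltW.
have -> : l *: x + c = l *: (x + l^-1 *: c).
  by rewrite scalerDr scalerA mulfV ?gt_eqF // scale1r.
by rewrite normrZ gtr0_norm // ler_pM2l // opp_cone_dist_le.
Qed.

Lemma closed_cone_separation w : closed C -> ~ C w ->
  exists f : V -> R, [/\ dual_elt f, forall c, C c -> 0 <= f c & f w < 0].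
Proof.
move=> Cclosed nCw.
have [e e_gt0 e_le] : exists2 e : R, 0 < e & forall c, C c -> e <= `|w - c|.
  have /nbhs_normP [e /= e_gt0 wC] : nbhs w (~` C).
    by move: (closed_openC Cclosed); rewrite openE; exact.
  by exists e => // c Cc; rewrite leNgt; apply/negP => /wC.
have dist_gt0 : 0 < opp_cone_dist (- w).
  apply: lt_le_trans e_gt0 _; apply: opp_cone_dist_ge => c Cc.
  by rewrite addrC -opprB normrN; exact: e_le.
have [f [fD fZ f_le fw]] := hahn_banach _ (- w) opp_cone_dist_sublinear.
have fN x : f (- x) = - f x by rewrite -scaleN1r fZ mulN1r.
have f_le_norm x : f x <= `|x|.
  by apply: le_trans (f_le x) _; have := opp_cone_dist_le x _ C0; rewrite addr0.
have [df _] := dual_elt_of_le_norm _ fD fZ f_le_norm.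
exists f; split=> // [c Cc|]; last by move: fw dist_gt0; rewrite fN; lra.
have := opp_cone_dist_le (- c) _ Cc; rewrite addNr normr0.
by have := f_le (- c); rewrite fN; lra.
Qed.

End ConeSeparation.

Lemma ultra_bounded_cvg {R : realType} {T : Type} (U : set_system T)
    (u : T -> R) (K : R) :
  UltraFilter U -> (forall t, `|u t| <= K) -> exists l : R, u @ U --> l.
Proof.
move=> Uultra uK.
have uUK : (u @ U) `[- K, K]%classic.
  suff : U (u @^-1` `[- K, K]%classic) by [].
  by apply: filterE => t /=; rewrite in_itv /= -ler_norml.
have [l [_ lU]] := segment_compact (fmap_proper_filter u ultra_proper) uUK.
exists l => B Bl; have [//|uUnB] := in_ultra_setVsetC (u @^-1` B) Uultra.
by have [x [nBx Bx]] := lU (~` B) B uUnB Bl.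
Qed.

Section WeakLimits.
Context {R : realType} {V : normedModType R} {T : Type}.
Implicit Types F : set_system T.

Definition weakly_cvg F (z : T -> V) (z0 : V) :=
  forall f : V -> R, dual_elt f -> (fun t => f (z t)) @ F --> f z0.

Lemma weakly_cvgB {F} {FF : Filter F} {z : T -> V} {z0 : V} (a : V) :
  weakly_cvg F z z0 -> weakly_cvg F (fun t => z t - a) (z0 - a).
Proof.
move=> zz0 f df; rewrite dual_eltB //.
under eq_fun do rewrite dual_eltB //.
by apply: cvgB; [exact: zz0 | exact: cvg_cst].
Qed.

Lemma closed_cone_weakly_closed {F} {FF : ProperFilter F} {z : T -> V} {z0 : V}
    {C : set V} :
  is_cone C -> closed C -> weakly_cvg F z z0 -> (\forall t \near F, C (z t)) ->
  C z0.
Proof.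
move=> Ccone Cclosed zz0 Cz; apply: contrapT => nCz0.
have C0 : C 0.
  by have [t /(Ccone.2 0 _ (lexx 0))] := filter_ex Cz; rewrite scale0r.
have [f [df f_ge0 fz0]] := closed_cone_separation _ Ccone C0 _ Cclosed nCz0.
suff : 0 <= f z0 by lra.
by apply: cvgr_to_ge (zz0 f df) _; apply: filterS Cz => t /f_ge0.
Qed.

Lemma normD_weakly_lsc {F} {FF : ProperFilter F} {z z' : T -> V} {z0 z0' : V}
    {c : R} :
  weakly_cvg F z z0 -> weakly_cvg F z' z0' ->
  (\forall t \near F, `|z t| + `|z' t| <= c) -> `|z0| + `|z0'| <= c.
Proof.
move=> zz0 zz0' zc.
have [f [df fb <-]] := norming_functional z0.
have [g [dg gb <-]] := norming_functional z0'.
apply: cvgr_to_le (cvgD (zz0 f df) (zz0' g dg)) _; apply: filterS zc => t.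
apply: le_trans; apply: lerD.
  by apply: le_trans (ler_norm _) _; rewrite -[`|z t|]mul1r fb.
by apply: le_trans (ler_norm _) _; rewrite -[`|z' t|]mul1r gb.
Qed.

Lemma reflexive_bounded_weakly_cluster F {FF : ProperFilter F} (z : T -> V)
    (K : R) :
  reflexive_space (V := V) -> (forall t, `|z t| <= K) ->
  exists U, [/\ UltraFilter U, F `<=` U & exists z0, weakly_cvg U z z0].
Proof.
move=> refl zK; have [U [Uultra FU]] := ultraFilterLemma FF.
have zU f : dual_elt f -> exists l : R, (fun t => f (z t)) @ U --> l.
  move=> df; have [M M_ge0 fM] := dual_elt_normbound _ df.
  apply: (ultra_bounded_cvg _ _ (M * K) Uultra) => t.
  by apply: le_trans (fM _) _; exact: ler_wpM2l.
pose Phi (f : V -> R) : R := lim ((fun t => f (z t)) @ U).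
have Phi_cvg f : dual_elt f -> (fun t => f (z t)) @ U --> Phi f.
  by move=> /(zU f) [l fl]; rewrite /Phi (cvg_lim _ fl).
have [z0 Phi_z0] : exists z0, forall f, dual_elt f -> Phi f = f z0.
  apply: refl.
  - move=> f g df dg; apply: cvg_lim => //.
    exact: cvgD (Phi_cvg f df) (Phi_cvg g dg).
  - by move=> a f df; apply: cvg_lim => //; exact: cvgMl_tmp (Phi_cvg f df).
  exists K => f M df M_ge0 fM; rewrite ler_norml.
  have fzK t : - (K * M) <= f (z t) <= K * M.
    by rewrite -ler_norml; apply: le_trans (fM _) _; rewrite mulrC ler_wpM2r.
  apply/andP; split; [apply: cvgr_to_ge (Phi_cvg f df) _ |
                      apply: cvgr_to_le (Phi_cvg f df) _];
    by apply: filterE => t; case/andP: (fzK t).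
exists U; split=> //; exists z0 => f df.
by rewrite -Phi_z0 //; exact: Phi_cvg.
Qed.

End WeakLimits.

Lemma half_addrB {K : numFieldType} {W : lmodType K} (a b v : W) :
  2^-1 *: (a + b) - v = 2^-1 *: ((a - v) + (b - v)).
Proof.
have half_vv : 2^-1 *: (v + v) = v.
  by rewrite scalerDr -scalerDl (_ : 2^-1 + 2^-1 = 1) ?scale1r //; field.
by rewrite addrACA -opprD scalerBr half_vv.
Qed.

Section QuasiLattice.
Context {R : realType} {V : normedModType R}.
Variable C : set V.
Implicit Types x y z a b : V.

Definition sigma_minimizer x y z :=
  upper_bounds C [set x; y] z /\
  forall w, upper_bounds C [set x; y] w -> sigma_xy x y z <= sigma_xy x y w.

Definition pos_colinear a b :=
  (exists l : R, 0 <= l /\ a = l *: b) \/ (exists l : R, 0 <= l /\ b = l *: a).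

Lemma pos_colinear_sym a b : pos_colinear a b -> pos_colinear b a.
Proof. by case=> ?; [right | left]. Qed.

Lemma upper_bounds2P x y z :
  upper_bounds C [set x; y] z <-> C (z - x) /\ C (z - y).
Proof.
split=> [Uz | [Czx Czy] _ [->|->]] //.
by split; apply: Uz; [left | right].
Qed.

Lemma generating_upper_bounds2_neq0 x y :
  generating_cone C -> upper_bounds C [set x; y] !=set0.
Proof.
move=> Cgen; have [a [b [Ca [Cb xy]]]] := Cgen (x - y).
exists (x + b); apply/upper_bounds2P.
by split; rewrite addrAC; [rewrite subrr add0r | rewrite xy subrK].
Qed.

Hypothesis Ccone : is_cone C.

Lemma upper_bounds2_midpoint {x y z z'} :
  upper_bounds C [set x; y] z -> upper_bounds C [set x; y] z' ->
  upper_bounds C [set x; y] (2^-1 *: (z + z')).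
Proof.
have [CD CZ] := Ccone.
move=> /upper_bounds2P[Czx Czy] /upper_bounds2P[Cz'x Cz'y].
have half_ge0 : 0 <= 2^-1 :> R by rewrite invr_ge0.
apply/upper_bounds2P; rewrite !half_addrB.
by split; apply: CZ half_ge0 (CD _ _ _ _).
Qed.

Lemma cone_subr_pos_colinear a b :
  C a -> C b -> pos_colinear a b -> `|b| <= `|a| -> C (a - b).
Proof.
have [_ CZ] := Ccone.
move=> Ca Cb [[l [l_ge0 a_eq]]|[l [l_ge0 b_eq]]]; [subst a | subst b].
- have [b0|b_neq0] := eqVneq b 0; first by move=> _; rewrite b0 scaler0 subr0 -b0.
  rewrite normrZ ger0_norm // -{1}[`|b|]mul1r ler_pM2r ?normr_gt0 // => l_ge1.
  by rewrite -{2}[b]scale1r -scalerBl; apply: CZ; rewrite ?subr_ge0.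
- have [a0|a_neq0] := eqVneq a 0; first by move=> _; rewrite a0 scaler0 subr0 -a0.
  rewrite normrZ ger0_norm // -{2}[`|a|]mul1r ler_pM2r ?normr_gt0 // => l_le1.
  by rewrite -{1}[a]scale1r -scalerBl; apply: CZ; rewrite ?subr_ge0.
Qed.

Lemma eq_upper_bounds2_pos_colinear x y z z' : proper_cone C ->
  upper_bounds C [set x; y] z -> upper_bounds C [set x; y] z' ->
  pos_colinear (z - x) (z' - x) -> pos_colinear (z - y) (z' - y) ->
  sigma_xy x y z = sigma_xy x y z' -> z = z'.
Proof.
move=> Cproper; wlog le_x : z z' / `|z' - x| <= `|z - x|.
  move=> gen Uz Uz' colx coly sz; have [|lt_x] := leP `|z' - x| `|z - x|.
    by move=> le_x; exact: gen.
  apply/esym/(gen z' z (ltW lt_x)) => //; exact: pos_colinear_sym.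
move=> /upper_bounds2P[Czx Czy] /upper_bounds2P[Cz'x Cz'y] colx coly.
rewrite /sigma_xy => sz; have le_y : `|z - y| <= `|z' - y| by lra.
have subrBB v a b : (a - v) - (b - v) = a - b by rewrite opprB addrA subrK.
apply/eqP; rewrite -subr_eq0; apply/eqP; apply: Cproper.
  by rewrite -(subrBB x); exact: cone_subr_pos_colinear.
rewrite opprB -(subrBB y).
exact: cone_subr_pos_colinear _ _ Cz'y Czy (pos_colinear_sym _ _ coly) le_y.
Qed.

Lemma sigma_minimizer_pos_colinear {x y z z'} : strictly_convex (V := V) ->
  sigma_minimizer x y z -> sigma_minimizer x y z' ->
  pos_colinear (z - x) (z' - x) /\ pos_colinear (z - y) (z' - y).
Proof.
move=> Vsc [Uz zmin] [Uz' z'min].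
have := zmin _ Uz'; have := z'min _ Uz.
have := zmin _ (upper_bounds2_midpoint Uz Uz').
rewrite /sigma_xy !half_addrB !normrZ ger0_norm ?invr_ge0 //.
have := ler_normD (z - x) (z' - x); have := ler_normD (z - y) (z' - y).
by move=> *; split; apply: Vsc; lra.
Qed.

Lemma sigma_minimizer_unique x y z z' :
  strictly_convex (V := V) -> proper_cone C ->
  sigma_minimizer x y z -> sigma_minimizer x y z' -> z = z'.
Proof.
move=> Vsc Cproper zmin z'min.
have [colx coly] := sigma_minimizer_pos_colinear Vsc zmin z'min.
apply: eq_upper_bounds2_pos_colinear zmin.1 z'min.1 colx coly _ => //.
by apply/le_anti; rewrite zmin.2 ?z'min.2 //; [exact: zmin.1 | exact: z'min.1].
Qed.

Lemma sigma_minimizer_exists x y : reflexive_space (V := V) -> closed C ->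
  upper_bounds C [set x; y] !=set0 -> exists z, sigma_minimizer x y z.
Proof.
move=> Vrefl Cclosed Uxy_neq0.
pose m := inf [set sigma_xy x y z | z in upper_bounds C [set x; y]].
have m_le z : upper_bounds C [set x; y] z -> m <= sigma_xy x y z.
  move=> Uz; apply: ge_inf; last by exists z.
  by exists 0 => _ [w _ <-]; rewrite addr_ge0.
have near_m n : exists z,
    upper_bounds C [set x; y] z /\ sigma_xy x y z < m + n.+1%:R^-1.
  have m_lt : m < m + n.+1%:R^-1 by rewrite ltrDl invr_gt0.
  by have [_ [z Uz <-] ?] := inf_lt (image_nonempty _ Uxy_neq0) m_lt; exists z.
have [zs zs_min] := choice near_m.
have zs_bounded n : `|zs n| <= `|x| + (m + 1).
  have [_] := zs_min n; rewrite /sigma_xy.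
  have := ler_normD (zs n - x) x; rewrite subrK.
  have : n.+1%:R^-1 <= 1 :> R by rewrite invf_le1 ?ler1n.
  by have := normr_ge0 (zs n - y); move: (n.+1%:R^-1) => e; lra.
have [U [Uultra inftyU [z zs_z]]] :=
  reflexive_bounded_weakly_cluster \oo _ _ Vrefl zs_bounded.
have Uz : upper_bounds C [set x; y] z.
  apply/upper_bounds2P; split;
    apply: (closed_cone_weakly_closed Ccone Cclosed (weakly_cvgB _ zs_z));
    by apply: filterE => n; have [/upper_bounds2P[]] := zs_min n.
exists z; split=> // w Uw; apply: le_trans (m_le _ Uw).
apply/ler_addgt0Pr => e e_gt0.
apply: normD_weakly_lsc (weakly_cvgB x zs_z) (weakly_cvgB y zs_z) _.
apply: inftyU; apply: filterS (near_infty_natSinv_lt (PosNum e_gt0)) => n /= ne.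
by have [_ /ltW/le_trans] := zs_min n; apply; rewrite lerD2l ltW.
Qed.

End QuasiLattice.

Theorem theorem6p1 (R : realType) (X : completeNormedModType R) (C : set X) :
  strictly_convex (V := X) -> reflexive_space (V := X) ->
  is_cone C -> closed C -> proper_cone C -> generating_cone C ->
  upsilon_quasi_lattice C.
Proof.
move=> Xsc Xrefl Ccone Cclosed Cproper Cgen x y.
have Uxy_neq0 := generating_upper_bounds2_neq0 C x y Cgen.
split=> //.
have [z zmin] := sigma_minimizer_exists C Ccone x y Xrefl Cclosed Uxy_neq0.
exists z; split=> [|z' z'min]; first exact: zmin.
exact: sigma_minimizer_unique C Ccone x y z z' Xsc Cproper zmin z'min.
Qed.
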